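(* For all primes $p$, all integers $m,k$ and all integers $r\ge1$, $$\binom{p^rm-1}{k}(-1)^k\equiv\binom{p^{r-1}m-1}{\lfloor k/p\rfloor}(-1)^{\lfloor k/p\rfloor}\pmod{p^r}.$$
   Context: For all integers $n, k$, the binomial coefficient is defined by $\binom{n}{k} = \lim_{z \to 0} \frac{\Gamma(z+n+1)}{\Gamma(z+k+1)\Gamma(z+n-k+1)}$; this is a finite integer for all $n,k\in\mathbb{Z}$, agrees with the usual one for $n\ge0$, and satisfies $\binom{n}{k}=\binom{n}{n-k}$. $\lfloor x\rfloor$ denotes the floor function. *)

From HB Require Import structures.
From mathcomp Require Import all_boot all_order all_algebra.
Set Implicit Arguments. Unset Strict Implicit. Unset Printing Implicit Defensive.
Import Order.TTheory GRing.Theory Num.Theory.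
Local Open Scope ring_scope.

(* Binomial coefficient extended to all integers n, k, as the value of
   lim_{z->0} Gamma(z+n+1) / (Gamma(z+k+1) Gamma(z+n-k+1)), evaluated
   explicitly (residue computation):
   - n >= 0 : usual binomial, 0 if k < 0 or k > n;
   - n < 0, k >= 0 : (-1)^k C(k-n-1, k);
   - n < 0, k <= n : (-1)^(n-k) C(-k-1, n-k);
   - n < k < 0 : 0. *)
Definition binomZ (n k : int) : int :=
  if 0 <= n then (if 0 <= k then (binomial (absz n) (absz k))%:Z else 0)
  else if 0 <= k then (-1) ^+ absz k * (binomial (absz (k - n - 1)%R) (absz k))%:Z
  else if k <= n then (-1) ^+ absz (n - k) * (binomial (absz (- k - 1)%R) (absz (n - k)%R))%:Z
  else 0.

From HB Require Import structures.
From mathcomp Require Import all_boot all_order all_algebra zify ring.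
Import Order.TTheory GRing.Theory Num.Theory.
Local Open Scope ring_scope.

(* For k >= 0 put s_c(k) = (-1)^k C(c - 1, k) = prod_(1 <= j <= k) (j - c) / k!.
   When c = p d, the factors with p | j, j = p i, are p (i - d), and they
   assemble into s_d(k / p); hence s_(pd)(k) A_k = B_k s_d(k / p), where A_k
   and B_k are the products of j and of j - pd over the j <= k prime to p.
   If p^e divides pd then B_k = A_k mod p^e, and A_k is a unit mod p^e.
   Negative k are reduced to this case by the symmetry C(n, k) = C(n, n - k),
   which sends k to pd - 1 - k and k / p to d - 1 - k / p, at the cost of the
   signs (-1)^(pd - 1) and (-1)^(d - 1), which agree mod p^e; when
   pd - 1 < k < 0 both sides vanish. *)

Lemma binomZ0 (n : int) : binomZ n 0 = 1.
Proof. by rewrite /binomZ; case: n => n //=; rewrite bin0. Qed.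

Lemma binomZ_eq0 (n k : int) : n < k -> k < 0 -> binomZ n k = 0.
Proof.
move=> n_lt_k k_lt0; have n_lt0 := lt_trans n_lt_k k_lt0.
by rewrite /binomZ !leNgt n_lt0 k_lt0 n_lt_k.
Qed.

Lemma binomZ_sym (n k : int) : binomZ n k = binomZ n (n - k).
Proof.
rewrite /binomZ; have [n_ge0|n_lt0] := lerP 0 n.
  have [k_ge0|k_lt0] := lerP 0 k; have [nk_ge0|nk_lt0] := lerP 0 (n - k) => //.
  - rewrite -bin_sub; last by lia.
    by rewrite (_ : `|n - k| = `|n| - `|k|)%N; last by lia.
  - by rewrite bin_small; last by lia.
  - by rewrite bin_small; last by lia.
have [k_ge0|k_lt0] := lerP 0 k.
  rewrite leNgt (_ : n - k < 0) /=; last by lia.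
  rewrite (_ : n - k <= n); last by lia.
  rewrite (_ : n - (n - k) = k); last by ring.
  by rewrite (_ : - (n - k) - 1 = k - n - 1); last by ring.
have [k_le_n|n_lt_k] := lerP k n.
  rewrite (_ : 0 <= n - k); last by lia.
  by rewrite (_ : n - k - n - 1 = - k - 1); last by ring.
rewrite leNgt (_ : n - k < 0) /=; last by lia.
by rewrite (_ : n - k <= n = false); last by lia.
Qed.

Lemma mul_binomZ_left (n : int) (k : nat) :
  k.+1%:Z * binomZ n k.+1 = (n - k%:Z) * binomZ n k.
Proof.
rewrite /binomZ; case: n => [n|n] /=.
  have [n_lt_k|k_le_n] := ltnP n k; first by rewrite !bin_small ?mulr0 // ltnW.
  by rewrite subzn // -!PoszM mul_bin_left.
rewrite NegzE (_ : (k.+1 + n.+1 - 1 = (k + n).+1)%N); last by lia.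
rewrite (_ : absz (k%:Z - - n.+1%:Z - 1)%R = (k + n)%N); last by lia.
rewrite exprS mulrCA -PoszM -mul_bin_diag PoszM /=.
rewrite (_ : Posz (k + n).+1 = k%:Z + n%:Z + 1); last by lia.
rewrite (_ : Posz n.+1 = n%:Z + 1); last by lia.
ring.
Qed.

Lemma expN1zD (R : unitRingType) (x y : int) :
  (-1 : R) ^ (x + y) = (-1) ^ x * (-1) ^ y.
Proof. by rewrite exprzDr ?unitrN1. Qed.

Lemma expN1zN (R : numDomainType) (x : int) : (-1 : R) ^ (- x) = (-1) ^ x.
Proof. by rewrite !expN1r abszN. Qed.

Lemma signed_binomZ_sym (n k : int) :
  binomZ n k * (-1) ^ k = (-1) ^ n * (binomZ n (n - k) * (-1) ^ (n - k)).
Proof.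
have -> : (-1) ^ k = (-1) ^ n * (-1) ^ (n - k) :> int.
  by rewrite -(expN1zN _ (n - k)) -expN1zD opprB addrC subrK.
by rewrite binomZ_sym mulrCA.
Qed.

Definition sbinomZ (c : int) (k : nat) : int := binomZ (c - 1) k * (-1) ^+ k.

Lemma sbinomZ0 (c : int) : sbinomZ c 0 = 1.
Proof. by rewrite /sbinomZ binomZ0. Qed.

Lemma mul_sbinomZS (c : int) (k : nat) :
  k.+1%:Z * sbinomZ c k.+1 = (k.+1%:Z - c) * sbinomZ c k.
Proof.
rewrite /sbinomZ mulrA mul_binomZ_left exprS.
rewrite (_ : Posz k.+1 = k%:Z + 1); last by lia.
ring.
Qed.

Definition prod_ndvd (p : nat) (c : int) (k : nat) : int :=
  \prod_(1 <= j < k.+1 | ~~ (p %| j)%N) (j%:Z - c).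

Lemma prod_ndvd0 (p : nat) (c : int) : prod_ndvd p c 0 = 1.
Proof. by rewrite /prod_ndvd big_geq. Qed.

Lemma prod_ndvdS (p : nat) (c : int) (k : nat) :
  prod_ndvd p c k.+1 =
  if (p %| k.+1)%N then prod_ndvd p c k else prod_ndvd p c k * (k.+1%:Z - c).
Proof.
rewrite /prod_ndvd big_mkcond big_nat_recr //= -big_mkcond.
by case: (p %| k.+1)%N; rewrite ?mulr1.
Qed.

Lemma prod_ndvd_mod (P : int) (p : nat) (c : int) (k : nat) : (P %| c)%Z ->
  (prod_ndvd p c k = prod_ndvd p 0 k %[mod P])%Z.
Proof.
move=> P_dvd_c; apply/eqP; rewrite eqz_mod_dvd /prod_ndvd.
apply: (big_rec2 (fun x y => P %| x - y)%Z) => [|j x y _ P_dvd_xy].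
  by rewrite subrr dvdz0.
rewrite subr0 (_ : _ - _ = j%:Z * (x - y) - c * x); last by ring.
by rewrite rpredB ?(dvdz_mull _ P_dvd_xy) ?(dvdz_mulr _ P_dvd_c).
Qed.

Lemma coprimez_prod_ndvd (p e : nat) (k : nat) : prime p ->
  coprimez (p ^ e)%N%:Z (prod_ndvd p 0 k).
Proof.
move=> p_pr; apply: (big_ind (coprimez (p ^ e)%N%:Z)) => [|x y|j p_ndvd_j].
- by rewrite coprimezE coprimen1.
- by rewrite coprimezMr => -> ->.
by rewrite subr0 coprimezE coprimeXl // prime_coprime.
Qed.

Lemma sbinomZ_prod_ndvd (p : nat) (d : int) (k : nat) : (0 < p)%N ->
  sbinomZ (p%:Z * d) k * prod_ndvd p 0 k =
  prod_ndvd p (p%:Z * d) k * sbinomZ d (k %/ p).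
Proof.
move=> p_gt0; elim: k => [|k IH]; first by rewrite !prod_ndvd0 div0n !sbinomZ0.
rewrite divnS // !prod_ndvdS; case: ifP => [p_dvd|p_ndvd]; last first.
  rewrite add0n subr0 mulrC -(mulrA (prod_ndvd p 0 k)) mul_sbinomZS mulrCA.
  by rewrite [prod_ndvd p 0 k * _]mulrC IH; ring.
rewrite add1n; set q := (k %/ p)%N in IH *.
have k1E : k.+1%:Z = p%:Z * q.+1%:Z.
  by rewrite -PoszM mulnC -(divnK p_dvd) divnS // p_dvd.
apply: (mulfI (_ : k.+1%:Z != 0)) => //.
rewrite mulrA mul_sbinomZS -mulrA IH k1E -mulrA (mulrCA q.+1%:Z) mul_sbinomZS.
ring.
Qed.

Lemma sbinomZ_lucas_mod (p e : nat) (d : int) (k : nat) : prime p ->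
  ((p ^ e)%N%:Z %| p%:Z * d)%Z ->
  (sbinomZ (p%:Z * d) k = sbinomZ d (k %/ p) %[mod (p ^ e)%N%:Z])%Z.
Proof.
move=> p_pr pe_dvd; apply/eqP; rewrite eqz_mod_dvd.
rewrite -(Gauss_dvdzl _ (coprimez_prod_ndvd _ e k p_pr)) mulrBl.
rewrite sbinomZ_prod_ndvd ?prime_gt0 // mulrC -mulrBr dvdz_mull //.
by rewrite -eqz_mod_dvd; apply/eqP/prod_ndvd_mod.
Qed.

Lemma divz_reflect (p : nat) (d k : int) : (0 < p)%N ->
  ((p%:Z * d - 1 - k) %/ p)%Z = d - 1 - (k %/ p)%Z.
Proof.
move=> p_gt0; have p_neq0 : p%:Z != 0 by rewrite eqz_nat -lt0n.
rewrite {1}(divz_eq k p).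
rewrite (_ : _ - _ = (d - 1 - (k %/ p)%Z) * p + (p%:Z - 1 - (k %% p)%Z)); last by ring.
have rem_bounds : 0 <= p%:Z - 1 - (k %% p)%Z < `|p%:Z|%N.
  by have := modz_ge0 k p_neq0; have := ltz_pmod k (_ : 0 < p%:Z); lia.
by rewrite divzMDl // (divz_small rem_bounds) addr0.
Qed.

Lemma expN1z_pred_mod (p e : nat) (d : int) : prime p ->
  ((p ^ e)%N%:Z %| p%:Z * d)%Z ->
  ((-1) ^ (p%:Z * d - 1) = (-1) ^ (d - 1) %[mod (p ^ e)%N%:Z])%Z.
Proof.
move=> p_pr pe_dvd; apply/eqP; rewrite eqz_mod_dvd.
have p_gt0 := prime_gt0 p_pr.
rewrite (_ : p%:Z * d - 1 = (d - 1) + p.-1%:Z * d); last first.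
  by rewrite -[p in LHS]prednK // -addn1 PoszD; ring.
rewrite expN1zD -[X in _ - X]mulr1 -mulrBr dvdz_mull //.
rewrite expN1r -signr_odd abszM oddM.
have [p2|p_odd] := even_prime p_pr; last first.
  by rewrite -(prednK p_gt0) oddS in p_odd; rewrite (negbTE p_odd) subrr dvdz0.
(* For p = 2 the exponents differ by d; if d is odd, p^e | 2 d forces e <= 1. *)
move: pe_dvd; rewrite p2 /=; case d_odd: (odd `|d|); last by rewrite subrr dvdz0.
case: e => [|[|e]] // pe_dvd.
exfalso; move: pe_dvd; rewrite dvdzE abszM /= expnS dvdn_pmul2l //.
by move=> /(dvdn_trans (dvdn_exp (ltn0Sn e) (dvdnn 2))); rewrite dvdn2 d_odd.
Qed.

Theorem binomZ_lucas_mod (p e : nat) (d k : int) : prime p ->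
  ((p ^ e)%N%:Z %| p%:Z * d)%Z ->
  (binomZ (p%:Z * d - 1) k * (-1) ^ k
     = binomZ (d - 1) (k %/ p)%Z * (-1) ^ (k %/ p)%Z %[mod (p ^ e)%N%:Z])%Z.
Proof.
move=> p_pr pe_dvd; have p_gt0 : 0 < p%:Z by rewrite ltz_nat prime_gt0.
have lucas_ge0 (j : int) : 0 <= j ->
    (binomZ (p%:Z * d - 1) j * (-1) ^ j
       = binomZ (d - 1) (j %/ p)%Z * (-1) ^ (j %/ p)%Z %[mod (p ^ e)%N%:Z])%Z.
  by case: j => // j _; rewrite divz_nat; exact: sbinomZ_lucas_mod.
have [k_ge0|k_lt0] := lerP 0 k; first exact: lucas_ge0.
have [k_le_N|N_lt_k] := lerP k (p%:Z * d - 1).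
  rewrite signed_binomZ_sym [in RHS]signed_binomZ_sym.
  rewrite -(divz_reflect _ _ _ (prime_gt0 p_pr)) -modzMm.
  by rewrite (expN1z_pred_mod _ _ _ p_pr pe_dvd) lucas_ge0 ?subr_ge0 // modzMm.
have q_lt0 : (k %/ p)%Z < 0 by rewrite ltz_divLR // mul0r.
have d_le_q : d <= (k %/ p)%Z by rewrite lez_divRL //; lia.
rewrite !binomZ_eq0 ?mul0r //; lia.
Qed.

Theorem lemma5p4 (p : nat) (m k : int) (r : nat) :
  prime p -> (1 <= r)%N ->
  (binomZ ((p ^ r)%N%:Z * m - 1) k * (-1) ^+ absz k
     = binomZ ((p ^ r.-1)%N%:Z * m - 1) (k %/ p%:Z)%Z * (-1) ^+ absz (k %/ p%:Z)%Z
     %[mod (p ^ r)%N%:Z])%Z.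
Proof.
move=> p_pr r_gt0.
have prE : (p ^ r)%N%:Z * m = p%:Z * ((p ^ r.-1)%N%:Z * m).
  by rewrite mulrA -PoszM -expnS prednK.
rewrite prE -!expN1r; apply: binomZ_lucas_mod => //.
by rewrite -prE dvdz_mulr.
Qed.
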